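(* If $k$ is odd, then $f(n,k)\ge\left(1-\frac{4}{(k+1)^2}+o(1)\right)\binom{n}{3}$, where $o(1)\to0$ as $n\to\infty$ with $k$ fixed.
   Context: Let $K^{(2)}_n$ be the complete graph on $[n]$ with the natural order. A $k$-edge-labeling $\phi$ of $K^{(2)}_n$ assigns to each pair $uv$ a label from a fixed linearly ordered set of size $k$. A triple $u<v<w$ is good if $\phi(uv)<\phi(vw)$, and bad otherwise. $f(n,k)$ is the maximum, over all $k$-edge-labelings of $K^{(2)}_n$, of the number of good triples. *)

From mathcomp Require Import all_boot all_order all_algebra.
Set Implicit Arguments. Unset Strict Implicit. Unset Printing Implicit Defensive.

(* A k-edge-labeling is given by its values on the
   ordered pairs (u,v) with u < v; values on other pairs are irrelevant
   (never read), so maximizing over all such functions gives f(n,k). *)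
Definition labeling (n k : nat) := {ffun 'I_n * 'I_n -> 'I_k}.

Definition good_triples (n k : nat) (phi : labeling n k) : nat :=
  #|[set t : 'I_n * 'I_n * 'I_n |
       [&& (t.1.1 < t.1.2)%N, (t.1.2 < t.2)%N &
           (phi (t.1.1, t.1.2) < phi (t.1.2, t.2))%N]]|.

Definition f (n k : nat) : nat := \max_(phi : labeling n k) good_triples phi.

From mathcomp Require Import all_boot all_order all_algebra.
From mathcomp Require Import zify ring lra.
Import Order.TTheory GRing.Theory Num.Theory.

(* Write k = 2m - 1, cut [n] into m consecutive blocks of size about n/m and
   label uv by block(u) + block(v), a value in [0, 2m - 2].  Then
   phi(uv) < phi(vw) iff block(u) < block(w), so every increasing triple that
   does not lie inside one block is good.  The others number at most
   m * C(n/m + 1, 3) = (1/m^2 + o(1)) C(n, 3), and 1/m^2 = 4/(k+1)^2. *)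

Definition increasing_triples (n : nat) : {set 'I_n * 'I_n * 'I_n} :=
  [set t : 'I_n * 'I_n * 'I_n | t.1.1 < t.1.2 < t.2].

Lemma card_increasing_triples n : #|increasing_triples n| = 'C(n, 3).
Proof.
rewrite -card_ltn_sorted_tuples.
pose tuple_of (t : 'I_n * 'I_n * 'I_n) : 3.-tuple 'I_n := [tuple t.1.1; t.1.2; t.2].
have tuple_of_inj : injective tuple_of.
  by move=> [[? ?] ?] [[? ?] ?] /(congr1 val) [-> -> ->].
rewrite -(card_imset _ tuple_of_inj); apply: eq_card => t; rewrite inE.
case/tupleP: t => a t; case/tupleP: t => b t; case/tupleP: t => c t.
rewrite [t]tuple0; apply/imsetP/idP => [[[[u v] w]] | abc].
  by rewrite inE /= => uvw /(congr1 val) [-> -> ->]; rewrite /= andbT.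
by exists (a, b, c); [move: abc; rewrite inE /= andbT | apply: val_inj].
Qed.

Section BlockLabeling.

Variables (n m s : nat).
Hypotheses (s_gt0 : 0 < s) (n_le_blocks : n <= m.+1 * s).

Lemma block_lt (x : 'I_n) : x %/ s < m.+1.
Proof. by rewrite ltn_divLR //; apply: leq_trans (ltn_ord x) n_le_blocks. Qed.

Definition block_sum_labeling : labeling n m.*2.+1 :=
  [ffun p : 'I_n * 'I_n => inord (p.1 %/ s + p.2 %/ s)].

Lemma block_sum_labelingE (x y : 'I_n) :
  block_sum_labeling (x, y) = x %/ s + y %/ s :> nat.
Proof.
by rewrite ffunE inordK // ltnS -addnn leq_add // -ltnS block_lt.
Qed.

Definition same_block_triples : {set 'I_n * 'I_n * 'I_n} :=
  [set t in increasing_triples n | t.1.1 %/ s == t.2 %/ s].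

Lemma increasing_triples_sub_good_or_same_block :
  increasing_triples n \subset
    [set t : 'I_n * 'I_n * 'I_n | [&& t.1.1 < t.1.2, t.1.2 < t.2 &
       block_sum_labeling (t.1.1, t.1.2) < block_sum_labeling (t.1.2, t.2)]]
    :|: same_block_triples.
Proof.
apply/subsetP => -[[u v] w]; rewrite !inE /= => /andP [uv vw].
rewrite uv vw !block_sum_labelingE addnC ltn_add2l /=.
by rewrite orbC -leq_eqVlt leq_div2r // ltnW // (ltn_trans uv).
Qed.

Lemma same_block_triplesP (u v w : 'I_n) : (u, v, w) \in same_block_triples ->
  [/\ u < v < w, v %/ s = u %/ s & w %/ s = u %/ s].
Proof.
rewrite !inE /= => /andP [/andP [uv vw] /eqP uw]; rewrite uv vw; split=> //.
apply/eqP; rewrite eqn_leq (leq_div2r s (ltnW uv)) andbT uw.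
by apply: leq_div2r; apply: ltnW.
Qed.

Lemma ltn_mod_same_block {x y : nat} : x < y -> x %/ s = y %/ s -> x %% s < y %% s.
Proof. by move=> xy e; rewrite -(ltn_add2l (x %/ s * s)) -divn_eq e -divn_eq. Qed.

Lemma card_same_block_triples : #|same_block_triples| <= m.+1 * 'C(s, 3).
Proof.
pose mod_of (x : 'I_n) : 'I_s := Ordinal (ltn_pmod x s_gt0).
pose code (t : 'I_n * 'I_n * 'I_n) : 'I_m.+1 * ('I_s * 'I_s * 'I_s) :=
  (Ordinal (block_lt t.1.1), (mod_of t.1.1, mod_of t.1.2, mod_of t.2)).
have eq_divmod (x y : 'I_n) : x %/ s = y %/ s -> x %% s = y %% s -> x = y.
  by move=> ed em; apply: val_inj; rewrite /= (divn_eq x s) ed em -divn_eq.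
have code_inj : {in same_block_triples &, injective code}.
  move=> [[u v] w] [[u' v'] w'] /same_block_triplesP [_ vu wu].
  move=> /same_block_triplesP [_ vu' wu'].
  move=> /(congr1 (fun c => (val c.1, val c.2.1.1, val c.2.1.2, val c.2.2))).
  move=> [eu emu emv emw]; have eu' := eq_divmod u u' eu emu.
  have ev : v = v' by apply: eq_divmod; rewrite // vu vu'.
  have ew : w = w' by apply: eq_divmod; rewrite // wu wu'.
  by rewrite eu' ev ew.
rewrite -[m.+1]card_ord -card_increasing_triples -cardsT -cardsX.
rewrite -(card_in_imset code_inj); apply/subset_leq_card/subsetP => c.
case/imsetP => -[[u v] w] /same_block_triplesP [/andP [uv vw] vu wu] ->.
rewrite !inE /= (ltn_mod_same_block uv) ?vu //.
by rewrite (ltn_mod_same_block vw) // vu wu.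
Qed.

Lemma binomial3_le_f_add : 'C(n, 3) <= f n m.*2.+1 + m.+1 * 'C(s, 3).
Proof.
have good_le_f : good_triples block_sum_labeling <= f n m.*2.+1.
  exact: (leq_bigmax (F := @good_triples n m.*2.+1)).
rewrite -card_increasing_triples.
apply: leq_trans (leq_add good_le_f card_same_block_triples).
apply: leq_trans (leq_card_setU _ _).
exact: subset_leq_card increasing_triples_sub_good_or_same_block.
Qed.

End BlockLabeling.

Lemma bin3_mul6 x : 'C(x, 3) * 6 = x * x.-1 * x.-2.
Proof. by rewrite (bin_ffact x 3) !ffactnS ffactn0 muln1 mulnA. Qed.

Lemma ffact3_div_le (M x : nat) : 0 < M ->
  M ^ 3 * ((x %/ M).+1 * (x %/ M) * (x %/ M).-1) <= (x + M) * x * x.-1.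
Proof.
move=> M_gt0; set q := x %/ M.
have le_q : M * q <= x by rewrite mulnC leq_divM.
have le_qS : M * q.+1 <= x + M by rewrite mulnS addnC leq_add2r.
have le_qP : M * q.-1 <= x.-1 by rewrite -!subn1 mulnBr muln1; lia.
have -> : M ^ 3 * (q.+1 * q * q.-1) = M * q.+1 * (M * q) * (M * q.-1) by ring.
exact: leq_mul (leq_mul le_qS le_q) le_qP.
Qed.

Local Open Scope ring_scope.

Lemma blocks_binomial3_le_eventually (R : archiRealFieldType) (M : nat) (eps : R) :
  (0 < M)%N -> 0 < eps -> exists N, forall n, (N <= n)%N ->
  (M * 'C((n %/ M).+1, 3))%:R <= ((M%:R ^+ 2)^-1 + eps) * 'C(n, 3)%:R :> R.
Proof.
move=> M_gt0 eps_gt0; pose N := Num.bound ((M%:R + 2) / eps).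
exists N.+2 => n le_Nn; have [p -> le_Np] : exists2 p, n = p.+2 & (N <= p)%N.
  by exists n.-2; lia.
have eps_large : M%:R + 2 <= eps * p%:R :> R.
  rewrite mulrC -ler_pdivrMr //; apply/ltW/(lt_le_trans (archi_boundP _)).
    by apply: divr_ge0 (ltW eps_gt0); apply: addr_ge0; rewrite ler0n.
  by rewrite ler_nat.
have := ffact3_div_le M p.+2 M_gt0; rewrite -bin3_mul6 -(ler_nat R).
have := bin3_mul6 p.+2; move/(congr1 (fun x => x%:R : R)).
rewrite /= natrM; move: ('C(_, 3)) ('C(_, 3)) => b c.
rewrite !natrM !natrD -[p.+2]addn2 -[p.+1]addn1 !natrD.
set P := p%:R; set m := M%:R => c_eq b_le.
have m_ge1 : 1 <= m by rewrite ler1n.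
have P_ge0 : 0 <= P by rewrite ler0n.
have Z_ge0 : 0 <= (P + 2) * (P + 1) by apply: mulr_ge0; lra.
rewrite -(@ler_pM2l _ (m ^+ 2 * 6)); last by rewrite mulr_gt0 ?exprn_gt0 //; lra.
have -> : m ^+ 2 * 6 * (m * b%:R) = m ^+ 3 * (b%:R * 6) by ring.
have -> : m ^+ 2 * 6 * (((m ^+ 2)^-1 + eps) * c%:R) = c%:R * 6 + eps * m ^+ 2 * (c%:R * 6).
  by field; lra.
rewrite c_eq; set Z := (P + 2) * (P + 1).
have b_le' : m ^+ 3 * (b%:R * 6) <= Z * P + (m + 2) * Z.
  have -> : Z * P + (m + 2) * Z = (P + 2 + m) * (P + 2) * (P + 1) by rewrite /Z; ring.
  by rewrite exprS expr2.
have Z_eps : (m + 2) * Z <= eps * P * Z by rewrite ler_wpM2r.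
have eps_m : eps * P * Z <= eps * m ^+ 2 * (Z * P).
  have : 0 <= eps * P * Z by rewrite mulr_ge0 // mulr_ge0 // ltW.
  have : 1 <= m ^+ 2 by rewrite expr_ge1 // ler0n.
  nra.
lra.
Qed.

Theorem proposition4p2 (k : nat) : odd k ->
  forall eps : rat, (0 < eps)%R ->
  exists N : nat, forall n : nat, (N <= n)%N ->
    ((1 - 4 / ((k.+1)%:R ^+ 2) - eps) * ('C(n, 3))%:R <= (f n k)%:R :> rat)%R.
Proof.
move=> k_odd eps eps_gt0; set m := k./2.
have k_eq : k = m.*2.+1 by rewrite -[k in LHS]odd_double_half k_odd add1n.
have [N blocks_le] := blocks_binomial3_le_eventually _ _ _ (ltn0Sn m) eps_gt0.
exists N => n /blocks_le {}blocks_le.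
have n_le_blocks : (n <= m.+1 * (n %/ m.+1).+1)%N.
  by rewrite mulnC ltnW // ltn_ceil.
have := binomial3_le_f_add _ _ _ (ltn0Sn _) n_le_blocks.
rewrite -k_eq -(ler_nat rat) natrD => f_ge.
have -> : 4 / k.+1%:R ^+ 2 = (m.+1%:R ^+ 2)^-1 :> rat.
  by rewrite k_eq -doubleS -mul2n natrM exprMn; field; rewrite addrC natr1 pnatr_eq0.
rewrite -addrA -opprD mulrBl mul1r lerBlDr.
by apply: le_trans f_ge _; rewrite lerD2l.
Qed.
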